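(* Let $\mathbb{F}$ be a finite field and let $t,k,b,\ell$ be positive integers with $\ell<bk$. There exists a $t$-private $k$-party $\ell$-LMSSS over $\mathbb{F}$ in which every party's share lies in $\mathbb{F}^b$ (i.e. $b_1=\dots=b_k=b$) and whose access structure is $\Gamma=\{[k]\}$ (so its information rate is $\ell/(kb)$) if and only if there exists an $\mathbb{F}$-linear code $C\subseteq(\mathbb{F}^b)^k$ with rate at least $\ell/(kb)$ and distance at least $t+1$.
   Context: A $k$-party $\ell$-LMSSS over a finite field $\mathbb{F}$ with access structure $\Gamma$ (monotone increasing family of subsets of $[k]$) and adversary structure $\mathcal{T}$ (monotone decreasing, disjoint from $\Gamma$) is given by integers $e,b_1,\dots,b_k$ and an $\mathbb{F}$-linear map $\mathsf{Share}:\mathbb{F}^\ell\times\mathbb{F}^e\to\mathbb{F}^{b_1}\times\cdots\times\mathbb{F}^{b_k}$ such that for every $Q\in\Gamma$ a linear map recovers $\mathbf{x}$ from $\mathsf{Share}(\mathbf{x},\mathbf{r})_Q$ for all $\mathbf{x},\mathbf{r}$, and for every $U\in\mathcal{T}$ the distribution of $\mathsf{Share}(\mathbf{x},\mathbf{r})_U$ with $\mathbf{r}$ uniform in $\mathbb{F}^e$ does not depend on $\mathbf{x}$. It is $t$-private if $\mathcal{T}$ contains all subsets of size at most $t$; its information rate is $\ell/(b_1+\cdots+b_k)$. An $\mathbb{F}$-linear code with alphabet $\mathbb{F}^b$ and block length $k$ is an $\mathbb{F}$-linear subspace $C\subseteq(\mathbb{F}^b)^k$; its rate is $\dim_{\mathbb{F}}(C)/(bk)$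 and its distance is $\min_{c\ne c'\in C}|\{i\in[k]: c_i\ne c'_i\}|$. *)

From HB Require Import structures.
From mathcomp Require Import all_boot all_order all_algebra all_field.
Set Implicit Arguments. Unset Strict Implicit. Unset Printing Implicit Defensive.
Import GRing.Theory Num.Theory.
Local Open Scope ring_scope.

(* A k-party linear secret sharing map Share : F^l x F^e -> (F^b)^k with all
   share sizes equal to b.  Any F-linear map of this shape is of the form
   Share(x,r)_i = x *m A i + r *m R i for matrices A i, R i. *)
Definition share (F : fieldType) (k l e b : nat)
  (A : 'I_k -> 'M[F]_(l, b)) (R : 'I_k -> 'M[F]_(e, b))
  (x : 'rV[F]_l) (r : 'rV[F]_e) (i : 'I_k) : 'rV[F]_b :=
  x *m A i + r *m R i.

Definition monotone_incr (k : nat) (G : {set {set 'I_k}}) : Prop :=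
  forall Q Q' : {set 'I_k}, Q \in G -> Q \subset Q' -> Q' \in G.
Definition monotone_decr (k : nat) (T : {set {set 'I_k}}) : Prop :=
  forall U U' : {set 'I_k}, U \in T -> U' \subset U -> U' \in T.

Definition is_LMSSS (F : finFieldType) (k l e b : nat)
  (G T : {set {set 'I_k}})
  (A : 'I_k -> 'M[F]_(l, b)) (R : 'I_k -> 'M[F]_(e, b)) : Prop :=
  [/\ monotone_incr G, monotone_decr T, [disjoint G & T],
      (forall Q, Q \in G -> exists D : 'I_k -> 'M[F]_(b, l),
          forall x r, \sum_(i in Q) share A R x r i *m D i = x) &
      (* privacy: distribution of Share(x,r)_U for uniform r is independent of x *)
      (forall U, U \in T -> forall (x x' : 'rV[F]_l) (y : 'I_k -> 'rV[F]_b),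
          #|[set r : 'rV[F]_e | [forall i in U, share A R x r i == y i]]| =
          #|[set r : 'rV[F]_e | [forall i in U, share A R x' r i == y i]]|)].

Definition t_private_adv (k t : nat) (T : {set {set 'I_k}}) : Prop :=
  forall U : {set 'I_k}, (#|U| <= t)%N -> U \in T.

Definition code_rate (F : finFieldType) (k b : nat)
  (C : {vspace {ffun 'I_k -> 'rV[F]_b}}) : rat :=
  (\dim C)%:R / (b * k)%:R.

Definition code_dist_ge (F : finFieldType) (k b : nat)
  (C : {vspace {ffun 'I_k -> 'rV[F]_b}}) (d : nat) : Prop :=
  forall c c', c \in C -> c' \in C -> c != c' ->
    (d <= #|[set i : 'I_k | c i != c' i]|)%N.

From HB Require Import structures.
From mathcomp Require Import all_boot all_order all_algebra all_field.
Import GRing.Theory Num.Theory.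
Set Implicit Arguments. Unset Strict Implicit. Unset Printing Implicit Defensive.
Local Open Scope ring_scope.

(* Let D_i be the reconstruction maps of a scheme with access structure
   {[k]}. Each column z of the secret space gives the codeword (D_i z)_i, and
   these form a code of dimension l. A codeword supported on a private set U
   is zero: the shares on U of any secret x are also shares of 0, so x z,
   which only depends on the shares on U, vanishes for all x.
   Conversely, let G be a generator matrix of a code of distance > t, and pick
   E0 with E0 G^T = 1. Share x as s = x E + r (1 - G^T E0) with E the first l
   rows of E0; then s G^T recovers x. For |U| <= t, G restricted to the
   coordinates outside U is still injective, so the kernel of G^T contains a
   vector d with any prescribed entries on U; shifting r by d turns the shares
   of x on U into those of any other x'. *)

Section Flatten.

Variables (F : fieldType) (k b : nat).

Definition flat (c : {ffun 'I_k -> 'rV[F]_b}) : 'rV[F]_(k * b) :=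
  mxvec (\matrix_(i, j) c i 0 j).

Lemma flatE c i j : flat c 0 (mxvec_index i j) = c i 0 j.
Proof. by rewrite /flat mxvecE mxE. Qed.

Lemma flat_eq0 c : flat c = 0 -> c = 0.
Proof.
by move=> c0; apply/ffunP => i; apply/rowP => j; rewrite !ffunE !mxE -flatE c0 mxE.
Qed.

Lemma flat_is_linear : linear flat.
Proof.
by move=> a u v; apply/rowP => q; case/mxvec_indexP: q => i j; rewrite !mxE !flatE !ffunE !mxE.
Qed.

HB.instance Definition _ :=
  GRing.isLinear.Build F {ffun 'I_k -> 'rV[F]_b} 'rV[F]_(k * b) _ flat flat_is_linear.

Definition block_of (q : 'I_(k * b)) : 'I_k :=
  (enum_val (cast_ord (esym (mxvec_cast k b)) q)).1.

Lemma block_ofE i j : block_of (mxvec_index i j) = i.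
Proof. by rewrite /block_of /mxvec_index cast_ordK enum_rankK. Qed.

Definition sel (i : 'I_k) : 'M[F]_(k * b, b) :=
  \matrix_(q, j) (q == mxvec_index i j)%:R.

Lemma mul_selE (s : 'rV[F]_(k * b)) i j : (s *m sel i) 0 j = s 0 (mxvec_index i j).
Proof.
rewrite mxE (bigD1 (mxvec_index i j)) //= big1 ?addr0 => [|q /negbTE qN].
  by rewrite mxE eqxx mulr1.
by rewrite mxE qN mulr0.
Qed.

Definition block n (M : 'M[F]_(k * b, n)) (i : 'I_k) : 'M[F]_(b, n) :=
  \matrix_(j, c) M (mxvec_index i j) c.

Lemma sum_mul_sel_block n (M : 'M[F]_(k * b, n)) (s : 'rV[F]_(k * b)) :
  \sum_i s *m sel i *m block M i = s *m M.
Proof.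
apply/rowP => c; rewrite summxE mxE (reindex _ (curry_mxvec_bij _ _)) /=.
under eq_bigr => i _ do rewrite mxE.
by rewrite pair_bigA /=; apply: eq_bigr => -[i j] _; rewrite mul_selE mxE.
Qed.

Definition proj_out (U : {set 'I_k}) : 'M[F]_(k * b) :=
  \matrix_(p, q) ((p == q) && (block_of q \notin U))%:R.

Lemma mul_proj_outE U (s : 'rV[F]_(k * b)) q :
  (s *m proj_out U) 0 q = if block_of q \notin U then s 0 q else 0.
Proof.
rewrite mxE (bigD1 q) //= big1 ?addr0 => [|p /negbTE pN]; last by rewrite mxE pN mulr0.
by rewrite mxE eqxx; case: ifP; rewrite ?mulr1 ?mulr0.
Qed.

Lemma tr_proj_out U : (proj_out U)^T = proj_out U.
Proof. by apply/matrixP => p q; rewrite !mxE; case: eqVneq => // ->. Qed.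

Lemma proj_out_idem U : proj_out U *m proj_out U = proj_out U.
Proof.
apply/row_matrixP => p; rewrite row_mul; apply/rowP => q.
by rewrite mul_proj_outE !mxE; case: ifP => [->|_]; rewrite ?andbF.
Qed.

Lemma mul_proj_out_sel (U : {set 'I_k}) (s : 'rV[F]_(k * b)) i :
  i \in U -> s *m proj_out U *m sel i = 0.
Proof. by move=> iU; apply/rowP => j; rewrite mul_selE mul_proj_outE block_ofE iU mxE. Qed.

Lemma mul_proj_out_compl_sel (U : {set 'I_k}) (s : 'rV[F]_(k * b)) i :
  i \in U -> s *m (1%:M - proj_out U) *m sel i = s *m sel i.
Proof. by move=> iU; rewrite mulmxBr mulmx1 mulmxBl mul_proj_out_sel // subr0. Qed.

End Flatten.

Lemma kernel_vector_with_prescribed_part (F : fieldType) n m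
    (G : 'M[F]_(n, m)) (P : 'M[F]_n) :
  P *m P = P -> row_full (P *m G) -> forall w : 'rV[F]_n,
  exists2 d : 'rV[F]_n, d *m G = 0 & d *m (1%:M - P) = w *m (1%:M - P).
Proof.
move=> PP PGfull w.
have /submxP [tau tauE] := submx_full (- (w *m (1%:M - P) *m G)) PGfull.
exists (w *m (1%:M - P) + tau *m P).
  by rewrite mulmxDl -[tau *m P *m G]mulmxA -tauE addrN.
have P1P : P *m (1%:M - P) = 0 by rewrite mulmxBr mulmx1 PP subrr.
have idem : (1%:M - P) *m (1%:M - P) = 1%:M - P.
  by rewrite mulmxBl mul1mx P1P subr0.
by rewrite mulmxDl -!mulmxA P1P idem mulmx0 addr0.
Qed.

Section Codes.

Variables (F : finFieldType) (k b : nat) (C : {vspace {ffun 'I_k -> 'rV[F]_b}}).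

Lemma codeword_eq0 t c :
  code_dist_ge C t.+1 -> c \in C -> (#|[set i | c i != 0%R]| <= t)%N -> c = 0.
Proof.
move=> dist cC wt; apply/eqP; apply: contraTT wt => c0.
rewrite -ltnNge; apply: leq_trans (dist _ _ cC (mem0v C) c0) _.
by apply/subset_leq_card/subsetP => i; rewrite !inE ffunE.
Qed.

Lemma code_dist_lt_length t : code_dist_ge C t.+1 -> (0 < \dim C)%N -> (t < k)%N.
Proof.
move=> dist; rewrite lt0n dimv_eq0 -vpick0 ltnNge; apply: contra => kt.
apply/eqP; apply: codeword_eq0 dist (memv_pick C) _.
by rewrite (leq_trans (max_card _)) ?card_ord.
Qed.

Lemma generator_mx_exists :
  exists G : 'M[F]_(\dim C, k * b),
    row_free G /\ forall z, exists2 c, c \in C & z *m G = flat c.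
Proof.
pose X := vbasis C.
pose word (z : 'rV[F]_(\dim C)) := \sum_i z 0 i *: X`_i.
have wordC z : word z \in C.
  apply: memv_suml => i _; apply/memvZ/vbasis_mem/mem_nth.
  by rewrite size_tuple.
have GE z : z *m (\matrix_i flat X`_i) = flat (word z).
  rewrite mulmx_sum_row linear_sum.
  by apply: eq_bigr => i _; rewrite rowK linearZ.
exists (\matrix_i flat X`_i); split => [|z]; last by exists (word z); rewrite ?GE.
apply/inj_row_free => z; rewrite GE => /flat_eq0 z0; apply/rowP => i; rewrite mxE.
by move/freeP: (basis_free (vbasisP C)) => /(_ (fun i => z 0 i) z0 i).
Qed.

Lemma generator_proj_out_row_free t (G : 'M[F]_(\dim C, k * b)) (U : {set 'I_k}) :
  code_dist_ge C t.+1 -> row_free G -> (forall z, exists2 c, c \in C & z *m G = flat c) ->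
  (#|U| <= t)%N -> row_free (G *m proj_out F b U).
Proof.
move=> dist Gfree Gcode wtU; apply/inj_row_free => z; rewrite mulmxA.
have [c cC cE] := Gcode z; rewrite cE => cP.
suff c0 : c = 0 by apply: (row_free_inj Gfree); rewrite mul0mx cE c0 linear0.
apply: codeword_eq0 dist cC (leq_trans (subset_leq_card _) wtU).
apply/subsetP => i; rewrite inE; apply: contraR => iU; apply/eqP/rowP => j.
have := congr1 (fun s : 'rV_(k * b) => s 0 (mxvec_index i j)) cP.
by rewrite /= mul_proj_outE block_ofE iU flatE !mxE.
Qed.

End Codes.

Lemma card_share_shift (F : finFieldType) k l e b (A : 'I_k -> 'M[F]_(l, b))
    (R : 'I_k -> 'M[F]_(e, b)) (U : {set 'I_k}) (x x' : 'rV[F]_l) (d : 'rV[F]_e)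
    (y : 'I_k -> 'rV[F]_b) :
  (forall i, i \in U -> d *m R i = (x' - x) *m A i) ->
  #|[set r | [forall i in U, share A R x r i == y i]]| =
  #|[set r | [forall i in U, share A R x' r i == y i]]|.
Proof.
move=> dR; rewrite -(card_preimset _ (addIr d)); apply: eq_card => r.
rewrite !inE; apply: eq_forallb_in => i iU.
by rewrite /share mulmxDl dR // mulmxBl addrCA [x *m A i + _]addrC subrK addrC.
Qed.

Lemma full_threshold_structures k t : (t < k)%N ->
  [/\ monotone_incr [set [set: 'I_k]], monotone_decr [set U : {set 'I_k} | (#|U| <= t)%N]
    & [disjoint [set [set: 'I_k]] & [set U : {set 'I_k} | (#|U| <= t)%N]]].
Proof.
move=> tk; split.
- by move=> Q Q'; rewrite !inE => /eqP -> QQ'; rewrite eqEsubset subsetT.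
- by move=> U U'; rewrite !inE => Ut /subset_leq_card/leq_trans; apply.
- apply/pred0P => Q /=; rewrite !inE; apply/negP => /andP[/eqP ->].
  by rewrite cardsT card_ord leqNgt tk.
Qed.

Section GeneratorScheme.

Variables (F : finFieldType) (k b l m t : nat) (G : 'M[F]_(m, k * b)).
Hypotheses (lm : (l <= m)%N) (tk : (t < k)%N) (Gfree : row_free G).
Hypothesis Gout_free : forall U : {set 'I_k}, (#|U| <= t)%N -> row_free (G *m proj_out F b U).

Lemma generator_scheme :
  exists (A : 'I_k -> 'M[F]_(l, b)) (R : 'I_k -> 'M[F]_(k * b, b)),
    is_LMSSS [set [set: 'I_k]] [set U : {set 'I_k} | (#|U| <= t)%N] A R.
Proof.
have [E0 GE0] := row_freeP Gfree.
pose E : 'M[F]_(l, k * b) := pid_mx l *m E0^T.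
pose Rm : 'M[F]_(k * b) := 1%:M - G^T *m E0^T.
pose Dm : 'M[F]_(k * b, l) := G^T *m pid_mx l.
have E0G : E0^T *m G^T = 1%:M by rewrite -trmx_mul GE0 trmx1.
have EDm : E *m Dm = 1%:M.
  by rewrite mulmxA -(mulmxA _ E0^T) E0G mulmx1 pid_mx_id // pid_mx_1.
have RmDm : Rm *m Dm = 0.
  by rewrite mulmxBl mul1mx !mulmxA -(mulmxA G^T) E0G mulmx1 subrr.
have kerRm (d : 'rV[F]_(k * b)) : d *m G^T = 0 -> d *m Rm = d.
  by move=> dG; rewrite mulmxBr mulmx1 mulmxA dG mul0mx subr0.
have shareE x r i : share (fun i => E *m sel F b i) (fun i => Rm *m sel F b i) x r i
    = (x *m E + r *m Rm) *m sel F b i by rewrite /share mulmxDl !mulmxA.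
have [incr decr disj] := full_threshold_structures tk.
exists (fun i => E *m sel F b i), (fun i => Rm *m sel F b i); split => //.
  move=> Q; rewrite inE => /eqP ->; exists (block Dm) => x r.
  rewrite (eq_bigl xpredT) => [|i]; last by rewrite in_setT.
  under eq_bigr => i _ do rewrite shareE.
  by rewrite sum_mul_sel_block mulmxDl -(mulmxA x) -(mulmxA r) EDm RmDm mulmx0 mulmx1 addr0.
move=> U; rewrite inE => Ut x x' y.
have PGfull : row_full (proj_out F b U *m G^T).
  by rewrite /row_full -mxrank_tr trmx_mul trmxK tr_proj_out; exact: Gout_free.
have [d dG dP] :=
  kernel_vector_with_prescribed_part (proj_out_idem F b U) PGfull ((x' - x) *m E).
apply: (card_share_shift (d := d)) => i iU.
rewrite mulmxA kerRm // -(mul_proj_out_compl_sel d iU) dP.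
by rewrite mul_proj_out_compl_sel // mulmxA.
Qed.

End GeneratorScheme.

Section ReconstructionCode.

Variables (F : finFieldType) (k l e b : nat).
Variables (A : 'I_k -> 'M[F]_(l, b)) (R : 'I_k -> 'M[F]_(e, b)) (D : 'I_k -> 'M[F]_(b, l)).
Variable T : {set {set 'I_k}}.
Hypothesis recon : forall x r, \sum_(i in [set: 'I_k]) share A R x r i *m D i = x.
Hypothesis private : forall U, U \in T -> forall (x x' : 'rV[F]_l) (y : 'I_k -> 'rV[F]_b),
  #|[set r : 'rV[F]_e | [forall i in U, share A R x r i == y i]]| =
  #|[set r : 'rV[F]_e | [forall i in U, share A R x' r i == y i]]|.

Definition recon_code (z : 'cV[F]_l) : {ffun 'I_k -> 'rV[F]_b} :=
  [ffun i => (D i *m z)^T].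

Lemma recon_code_is_linear : linear recon_code.
Proof.
by move=> a u v; apply/ffunP => i; rewrite !ffunE mulmxDr -scalemxAr linearD linearZ.
Qed.

HB.instance Definition _ :=
  GRing.isLinear.Build F 'cV[F]_l {ffun 'I_k -> 'rV[F]_b} _ recon_code recon_code_is_linear.

Lemma recon_code_eq0_at z i : (recon_code z i == 0) = (D i *m z == 0).
Proof. by rewrite ffunE trmx_eq0. Qed.

Lemma recon_mulmx x r (z : 'cV[F]_l) : x *m z = \sum_i share A R x r i *m (D i *m z).
Proof.
rewrite -{1}(recon x r) mulmx_suml; apply: eq_big => [i|i _]; first by rewrite in_setT.
by rewrite mulmxA.
Qed.

Lemma recon_supported_private_eq0 U (z : 'cV[F]_l) :
  U \in T -> (forall i, i \notin U -> D i *m z = 0) -> z = 0.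
Proof.
move=> UT zout.
have restrict (s : 'I_k -> 'rV[F]_b) :
    \sum_i s i *m (D i *m z) = \sum_(i in U) s i *m (D i *m z).
  by rewrite (bigID (mem U)) /= [X in _ + X]big1 ?addr0 // => i /zout ->; rewrite mulmx0.
suff xz0 (x : 'rV[F]_l) : x *m z = 0.
  by rewrite -[z]mul1mx; apply/row_matrixP => j; rewrite row_mul xz0 row0.
pose y i := share A R x 0 i.
have : (0 < #|[set r | [forall i in U, share A R 0 r i == y i]]|)%N.
  by rewrite -(private UT x); apply/card_gt0P; exists 0; rewrite inE; apply/forall_inP.
case/card_gt0P => r; rewrite inE => /forall_inP ry.
rewrite (recon_mulmx x 0) restrict.
under eq_bigr => i iU do rewrite -[share A R x 0 i]/(y i) -(eqP (ry i iU)).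
by rewrite -restrict -recon_mulmx mul0mx.
Qed.

Lemma recon_code_dist t :
  t_private_adv t T -> code_dist_ge (limg (linfun recon_code)) t.+1.
Proof.
move=> tpriv c c' cC c'C cc'; rewrite ltnNge; apply: contra cc' => wt.
have /memv_imgP [z _] : c - c' \in limg (linfun recon_code) by rewrite memvB.
rewrite lfunE /= => czE; rewrite -subr_eq0 czE.
suff -> : z = 0 by rewrite linear0.
apply: recon_supported_private_eq0 (tpriv _ wt) _ => i; rewrite inE negbK => /eqP cc'i.
by apply/eqP; rewrite -recon_code_eq0_at -czE !ffunE cc'i subrr.
Qed.

Lemma recon_code_dim t : t_private_adv t T -> \dim (limg (linfun recon_code)) = l.
Proof.
move=> tpriv; rewrite limg_dim_eq; first by rewrite dimvf /dim /= muln1.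
apply/eqP; rewrite -subv0; apply/subvP => z; rewrite memv_cap memv_ker memv0 lfunE /=.
case/andP => _ /eqP z0; apply/eqP.
apply: recon_supported_private_eq0 (tpriv set0 _) _ => [|i _]; first by rewrite cards0.
by apply/eqP; rewrite -recon_code_eq0_at z0 ffunE.
Qed.

End ReconstructionCode.

Lemma code_rate_geE (F : finFieldType) k b l (C : {vspace {ffun 'I_k -> 'rV[F]_b}}) :
  (0 < k * b)%N -> (l%:R / (k * b)%:R <= code_rate C) = (l <= \dim C)%N.
Proof. by move=> kb; rewrite /code_rate mulnC ler_pM2r ?ler_nat // invr_gt0 ltr0n mulnC. Qed.

Unset Implicit Arguments.

Theorem mainTheorem2 (F : finFieldType) (t k b l : nat)
  (ht : (0 < t)%N) (hk : (0 < k)%N) (hb : (0 < b)%N) (hl : (0 < l)%N)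
  (hlbk : (l < b * k)%N) :
  (exists (e : nat) (A : 'I_k -> 'M[F]_(l, b)) (R : 'I_k -> 'M[F]_(e, b))
          (T : {set {set 'I_k}}),
      is_LMSSS [set [set: 'I_k]] T A R /\ t_private_adv t T)
  <->
  (exists C : {vspace {ffun 'I_k -> 'rV[F]_b}},
      l%:R / (k * b)%:R <= code_rate C /\ code_dist_ge C t.+1).
Proof.
have kb : (0 < k * b)%N by rewrite muln_gt0 hk.
split=> [[e [A [R [T [[_ _ _ reconG priv] tpriv]]]]] | [C [rate dist]]].
  have [D recon] := reconG _ (set11 _).
  exists (limg (linfun (recon_code D))); split; last exact: recon_code_dist recon priv t tpriv.
  by rewrite code_rate_geE // (recon_code_dim recon priv tpriv).
have lC : (l <= \dim C)%N by rewrite -code_rate_geE.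
have [G [Gfree Gcode]] := generator_mx_exists C.
have tk := code_dist_lt_length dist (leq_trans hl lC).
have [A [R scheme]] := generator_scheme lC tk Gfree
  (fun U => generator_proj_out_row_free dist Gfree Gcode).
by exists (k * b)%N, A, R, [set U : {set 'I_k} | (#|U| <= t)%N]; split => // U; rewrite inE.
Qed.
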